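(* Let $A$ be an $r\times r$ submatrix of a real symmetric $n\times n$ matrix. If one row of $A$ is a tropical multiple of another row of $A$, then $A$ is symmetrically tropically singular. The same holds if one column of $A$ is a tropical multiple of another column of $A$.
   Context: A row (or column) vector $u$ is a tropical multiple of $v$ if there is $c\in\mathbb R$ with $u_k=c+v_k$ for all $k$. For an $r\times r$ submatrix of a real symmetric matrix with row index set $I$ and column index set $J$, each bijection $\rho:I\to J$ gives a monomial $\prod_{i\in I}X_{i,\rho(i)}$ in commuting variables subject to the identification $X_{i,j}=X_{j,i}$, with value $\sum_{i\in I}A_{i,\rho(i)}$; the submatrix is symmetrically tropically singular if the minimum value is attained by at least two distinct monomials (distinct after the identification). *)

From HB Require Import structures.
From mathcomp Require Import all_boot all_order all_algebra.
Set Implicit Arguments. Unset Strict Implicit. Unset Printing Implicit Defensive.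
Import Order.TTheory GRing.Theory Num.Theory.
Local Open Scope ring_scope.

(* A bijection rho : I -> J is represented by a function f : 'I_n -> 'I_n
   whose restriction to I is injective with image J (values off I are irrelevant). *)
Definition is_bij {n : nat} (I J : {set 'I_n}) (f : 'I_n -> 'I_n) : Prop :=
  {in I &, injective f} /\ [set f i | i in I] = J.

(* Unordered pair {i,j} normalised as an ordered pair (min, max). *)
Definition sympair {n : nat} (i j : 'I_n) : 'I_n * 'I_n :=
  if (i <= j)%N then (i, j) else (j, i).

(* The monomial prod_{i in I} X_{i, f i} with X_{i,j} = X_{j,i}, encoded as its
   exponent vector indexed by unordered pairs. *)
Definition monomial {n : nat} (I : {set 'I_n}) (f : 'I_n -> 'I_n)
  : {ffun 'I_n * 'I_n -> nat} :=
  [ffun p => #|[set i in I | sympair i (f i) == p]|].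

Definition mono_val {R : numDomainType} {n : nat} (M : 'M[R]_n)
  (I : {set 'I_n}) (f : 'I_n -> 'I_n) : R :=
  \sum_(i in I) M i (f i).

Definition sym_trop_singular {R : numDomainType} {n : nat} (M : 'M[R]_n)
  (I J : {set 'I_n}) : Prop :=
  exists f g : 'I_n -> 'I_n,
    [/\ is_bij I J f, is_bij I J g, monomial I f != monomial I g &
        forall h, is_bij I J h ->
          mono_val M I f <= mono_val M I h /\ mono_val M I g <= mono_val M I h].

Definition row_trop_multiple {R : numDomainType} {n : nat} (M : 'M[R]_n)
  (J : {set 'I_n}) (i1 i2 : 'I_n) : Prop :=
  exists c : R, forall j, j \in J -> M i1 j = c + M i2 j.

Definition col_trop_multiple {R : numDomainType} {n : nat} (M : 'M[R]_n)
  (I : {set 'I_n}) (j1 j2 : 'I_n) : Prop :=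
  exists c : R, forall i, i \in I -> M i j1 = c + M i j2.

From HB Require Import structures.
From mathcomp Require Import all_boot all_order all_algebra perm.
Import Order.TTheory GRing.Theory Num.Theory.
Local Open Scope ring_scope.
Set Implicit Arguments. Unset Strict Implicit.

(* Take a bijection f : I -> J of minimal value and distinct p, q in I such that
   the 2x2 minor on rows p, q and columns f p, f q has equal diagonal sums; a row
   (resp. column) of the submatrix being a tropical multiple of another yields
   such p, q (resp. the preimages of the two columns).  Composing f with the
   transposition (p q) then gives a second bijection of minimal value, and its
   monomial differs from that of f: the variable X_{p, f p} occurs in it fewer
   times, since X_{p, f q} and X_{q, f p} differ from X_{p, f p} even after the
   identification X_{i,j} = X_{j,i}. *)

Lemma sympair_eq n (i j k l : 'I_n) : sympair i j = sympair k l ->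
  (i = k /\ j = l) \/ (i = l /\ j = k).
Proof. by rewrite /sympair; case: leqP => _; case: leqP => _; case=> -> ->; auto. Qed.

Lemma sympairI n (i : 'I_n) : injective (sympair i).
Proof. by move=> j k /sympair_eq [[_ ->] | [-> ->]]. Qed.

Lemma sympairIr n (j : 'I_n) : injective (sympair^~ j).
Proof. by move=> i k /sympair_eq [[-> _] | [-> ->]]. Qed.

Lemma card_set_in_sum (T : finType) (A : {pred T}) (P : pred T) :
  #|[set i in A | P i]| = (\sum_(i in A) P i)%N.
Proof.
rewrite -sum1_card (eq_bigl (fun i => (i \in A) && P i)) => [|i]; last by rewrite inE.
by rewrite big_mkcondr; apply: eq_bigr => i _; case: (P i).
Qed.

Lemma big_off2 (T : finType) (V : nmodType) (A : {pred T}) (F G : T -> V) p q :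
  p \in A -> q \in A -> p != q ->
  {in A, forall i, i != p -> i != q -> F i = G i} ->
  \sum_(i in A) F i + (G p + G q) = \sum_(i in A) G i + (F p + F q).
Proof.
move=> pA qA pq eqFG.
have splitpq (H : T -> V) : \sum_(i in A) H i
    = H p + H q + \sum_(i in A | (i != p) && (i != q)) H i.
  rewrite (bigD1 p) // (bigD1 q) /=; last by rewrite qA eq_sym.
  by rewrite addrA; congr (_ + _); apply: eq_bigl => i; rewrite andbA.
rewrite !splitpq (eq_bigr G) => [|i /andP[iA /andP[ip iq]]]; last exact: eqFG.
by rewrite (addrAC (F p + F q)) (addrAC (G p + G q)) (addrC (G p + G q)).
Qed.

Section Bijections.
Variables (n : nat) (I J : {set 'I_n}).

Lemma eq_is_bij (f g : 'I_n -> 'I_n) : f =1 g -> is_bij I J f -> is_bij I J g.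
Proof.
move=> fg [injf imf]; split; last by rewrite -imf; apply: eq_imset => x; rewrite fg.
by move=> x y xI yI; rewrite -!fg; apply: injf.
Qed.

Lemma is_bij_tperm (f : 'I_n -> 'I_n) p q : p \in I -> q \in I ->
  is_bij I J f -> is_bij I J (f \o tperm p q).
Proof.
move=> pI qI [injf imf].
have tpermI x : x \in I -> tperm p q x \in I by case: tpermP => // ->.
split=> [x y xI yI /injf | ]; first by move/(_ (tpermI x xI) (tpermI y yI))/perm_inj.
rewrite -imf; apply/setP => y; apply/imsetP/imsetP => [[x xI ->] | [x xI ->]].
  by exists (tperm p q x); rewrite ?tpermI.
by exists (tperm p q x); rewrite /= ?tpermK ?tpermI.
Qed.

Lemma exists_bij : #|I| = #|J| -> exists f, is_bij I J f.
Proof.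
move=> cardIJ; have [I0 | [x0 _]] := set_0Vmem I.
  exists id; split=> [x y | ]; first by rewrite I0 inE.
  by rewrite I0 imset0; apply/esym/eqP; rewrite -cards_eq0 -cardIJ I0 cards0.
pose f x := nth x0 (enum J) (index x (enum I)).
have index_lt x : x \in I -> (index x (enum I) < size (enum J))%N.
  by rewrite -cardE -cardIJ cardE index_mem mem_enum.
have injf : {in I &, injective f}.
  move=> x y xI yI /eqP; rewrite (nth_uniq x0) ?index_lt ?enum_uniq // => /eqP.
  by apply: (index_inj x0); rewrite mem_enum.
exists f; split=> //; apply/eqP; rewrite eqEcard card_in_imset // cardIJ leqnn andbT.
by apply/subsetP => _ /imsetP[x xI ->]; rewrite -mem_enum mem_nth ?index_lt.
Qed.

Lemma monomial_tperm (f : 'I_n -> 'I_n) p q : p \in I -> q \in I -> p != q ->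
  is_bij I J f -> monomial I (f \o tperm p q) != monomial I f.
Proof.
move=> pI qI pq [injf _]; set P := sympair p (f p).
have fqp : f q != f p by apply: contra pq => /eqP/injf-> //; rewrite eq_sym.
have qp : q != p by rewrite eq_sym.
pose F i : nat := sympair i (f (tperm p q i)) == P.
pose G i : nat := sympair i (f i) == P.
have off2 : {in I, forall i, i != p -> i != q -> F i = G i}.
  by move=> i _ ip iq; rewrite /F tpermD // eq_sym.
have := big_off2 pI qI pq off2; rewrite /F /G /= tpermL tpermR eqxx.
rewrite (inj_eq (@sympairI _ p)) (inj_eq (@sympairIr _ (f p))) (negbTE fqp) (negbTE qp).
apply: contraPneq => /ffunP/(_ P); rewrite !ffunE !card_set_in_sum => ->.
by move/addnI.
Qed.
End Bijections.

Definition balanced_minor2 (R : numDomainType) n (M : 'M[R]_n) (i1 i2 j1 j2 : 'I_n) :=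
  M i1 j1 + M i2 j2 = M i1 j2 + M i2 j1.

Lemma row_trop_multiple_balanced (R : numDomainType) n (M : 'M[R]_n) J i1 i2 j1 j2 :
  row_trop_multiple M J i1 i2 -> j1 \in J -> j2 \in J -> balanced_minor2 M i1 i2 j1 j2.
Proof.
by case=> c rowM j1J j2J; rewrite /balanced_minor2 !rowM // -!addrA (addrC (M i2 j1)).
Qed.

Lemma col_trop_multiple_balanced (R : numDomainType) n (M : 'M[R]_n) I i1 i2 j1 j2 :
  col_trop_multiple M I j1 j2 -> i1 \in I -> i2 \in I -> balanced_minor2 M i1 i2 j1 j2.
Proof. by case=> c colM i1I i2I; rewrite /balanced_minor2 !colM // addrCA addrA. Qed.

Section SwapInMinimalBijection.
Variables (R : numDomainType) (n : nat) (M : 'M[R]_n) (I J : {set 'I_n}).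

Lemma mono_val_tperm (f : 'I_n -> 'I_n) p q : p \in I -> q \in I -> p != q ->
  balanced_minor2 M p q (f p) (f q) -> mono_val M I (f \o tperm p q) = mono_val M I f.
Proof.
move=> pI qI pq balanced; apply: (addIr (M p (f p) + M q (f q))).
rewrite /mono_val [in RHS]balanced.
have := @big_off2 _ _ I (fun i => M i (f (tperm p q i))) (fun i => M i (f i)) p q pI qI pq.
rewrite /= tpermL tpermR; apply=> i _ ip iq.
by rewrite tpermD // eq_sym.
Qed.

Lemma sym_trop_singular_tperm (f : 'I_n -> 'I_n) p q :
  is_bij I J f -> (forall h, is_bij I J h -> mono_val M I f <= mono_val M I h) ->
  p \in I -> q \in I -> p != q -> balanced_minor2 M p q (f p) (f q) ->
  sym_trop_singular M I J.
Proof.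
move=> bij_f min_f pI qI pq balanced; exists f, (f \o tperm p q); split=> //.
- exact: is_bij_tperm.
- by rewrite eq_sym (monomial_tperm pI qI pq bij_f).
- by move=> h /min_f; rewrite mono_val_tperm.
Qed.
End SwapInMinimalBijection.

Lemma exists_min_bij (R : realDomainType) n (M : 'M[R]_n) (I J : {set 'I_n}) :
  #|I| = #|J| -> exists2 f, is_bij I J f &
    forall h, is_bij I J h -> mono_val M I f <= mono_val M I h.
Proof.
move=> /exists_bij[f0 bij_f0].
pose is_bijb (h : {ffun 'I_n -> 'I_n}) := dinjectiveb h I && ([set h i | i in I] == J).
have is_bijbP (h : {ffun 'I_n -> 'I_n}) : reflect (is_bij I J h) (is_bijb h).
  exact: andPP (dinjectiveP _ _) eqP.
have ffun_bij h : is_bij I J h -> is_bijb (finfun h).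
  by move=> bij_h; apply/is_bijbP; apply: eq_is_bij bij_h => x; rewrite ffunE.
have [f /is_bijbP bij_f min_f] :=
  arg_minP (fun h : {ffun _} => mono_val M I h) (ffun_bij _ bij_f0).
exists f => // h /ffun_bij/min_f; congr (_ <= _).
by apply: eq_bigr => i _; rewrite ffunE.
Qed.

Theorem proposition4 (R : realFieldType) (n r : nat) (M : 'M[R]_n)
  (I J : {set 'I_n}) :
  M^T = M -> #|I| = r -> #|J| = r ->
  ((exists i1 i2, [/\ i1 \in I, i2 \in I, i1 != i2 & row_trop_multiple M J i1 i2]) \/
   (exists j1 j2, [/\ j1 \in J, j2 \in J, j1 != j2 & col_trop_multiple M I j1 j2])) ->
  sym_trop_singular M I J.
Proof.
move=> _ cardI cardJ.
have [f bij_f min_f] := exists_min_bij M (etrans cardI (esym cardJ)).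
have imf : [set f i | i in I] = J := proj2 bij_f.
case=> [[i1 [i2 [i1I i2I i12 row12]]] | [j1 [j2 [j1J j2J j12 col12]]]].
- apply: (sym_trop_singular_tperm bij_f min_f i1I i2I i12).
  by apply: row_trop_multiple_balanced row12 _ _; rewrite -imf imset_f.
- have /imsetP[p pI j1E] : j1 \in [set f i | i in I] by rewrite imf.
  have /imsetP[q qI j2E] : j2 \in [set f i | i in I] by rewrite imf.
  rewrite {}j1E {}j2E in j12 col12.
  apply: (sym_trop_singular_tperm bij_f min_f pI qI); first by apply: contraNneq j12 => ->.
  exact: col_trop_multiple_balanced col12 pI qI.
Qed.
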